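(* Under the hypotheses of the context with $\nu_0=0$, $\nu_1=\nu$, $x_0(s)\neq0$ and $s^{-\nu}y_1(s)/x_0(s)\to1$ as $s\to0^+$, define functions $q,p,u,v$ of $t>0$ by $t=4s$ and $$x_0(s)=i s^{-\nu/2}q(t),\quad y_0(s)=i s^{\nu/2}\big(p(t)-\tfrac{\nu}{2}q(t)\big),\quad \eta_0(s)=-\tfrac14u(t),\quad \xi_0(s)=\tfrac14\big(-v(t)+\tfrac{\nu}{2}u(t)\big).$$ Then, with $\dot{}=d/dt$, $$tq^2=\tfrac14u^2+u+2v,\qquad u=4p^2-(\nu^2-t+2v)q^2+2qpu,\qquad \dot u=q^2,\qquad \dot v=qp,$$ $$t\dot q=p+\tfrac14qu,\qquad t\dot p=\big(\tfrac14\nu^2-\tfrac14t+\tfrac12v\big)q-\tfrac14pu .$$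
   Context: Fix complex parameters $\nu_0,\nu_1$ and put $e_1=\nu_0+\nu_1$, $e_2=\nu_0\nu_1$. Let $x_0,x_1,y_0,y_1,\xi_0,\xi_1,\eta_0,\eta_1$ be smooth complex-valued functions of $s\in(0,\infty)$ satisfying, with $'=d/ds$, the system $s x_0'=-\eta_0x_0-x_1$, $s x_1'=-\eta_1x_0+sx_0+\xi_0x_0+\xi_1x_1$, $s y_1'=-\xi_1y_1+y_0$, $s y_0'=-\xi_0y_1-sy_1+\eta_0y_0+\eta_1y_1$, $\xi_0'=x_0y_0$, $\xi_1'=x_0y_1$, $\eta_0'=x_0y_1$, $\eta_1'=x_1y_1$, together with the boundary behaviour as $s\to0^+$: $\xi_0\to e_2$, $\xi_1\to-e_1$, $\eta_0\to0$, $\eta_1\to0$, and $x_j(s)y_k(s)\to0$ for all $j,k\in\{0,1\}$. *)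

From Stdlib Require Import Reals.
Open Scope R_scope.

Definition Cplx : Type := (R * R)%type.
Definition Re (z : Cplx) : R := fst z.
Definition Im (z : Cplx) : R := snd z.
Definition RtoC (r : R) : Cplx := (r, 0).
Definition Ci : Cplx := (0, 1).
Definition Cadd (z w : Cplx) : Cplx := (Re z + Re w, Im z + Im w).
Definition Copp (z : Cplx) : Cplx := (- Re z, - Im z).
Definition Csub (z w : Cplx) : Cplx := Cadd z (Copp w).
Definition Cmul (z w : Cplx) : Cplx :=
  (Re z * Re w - Im z * Im w, Re z * Im w + Im z * Re w).
Definition Cnorm (z : Cplx) : R := sqrt (Re z * Re z + Im z * Im z).
Definition Cinv (z : Cplx) : Cplx :=
  (Re z / (Re z * Re z + Im z * Im z), - Im z / (Re z * Re z + Im z * Im z)).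
Definition Cdiv (z w : Cplx) : Cplx := Cmul z (Cinv w).

Declare Scope C_scope.
Delimit Scope C_scope with C.
Infix "+" := Cadd : C_scope.
Infix "-" := Csub : C_scope.
Infix "*" := Cmul : C_scope.
Infix "/" := Cdiv : C_scope.
Notation "- z" := (Copp z) : C_scope.

(* s ^ a for real s > 0 and complex a, principal branch: exp (a * ln s). *)
Definition Cpow_pos (s : R) (a : Cplx) : Cplx :=
  (exp (Re a * ln s) * cos (Im a * ln s), exp (Re a * ln s) * sin (Im a * ln s)).

Definition Cderiv (f : R -> Cplx) (s : R) (l : Cplx) : Prop :=
  derivable_pt_lim (fun r => Re (f r)) s (Re l) /\
  derivable_pt_lim (fun r => Im (f r)) s (Im l).

Definition Csmooth_pos (f : R -> Cplx) : Prop :=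
  exists F : nat -> R -> Cplx,
    (forall s, 0 < s -> F O s = f s) /\
    (forall n s, 0 < s -> Cderiv (F n) s (F (S n) s)).

Definition Clim0 (f : R -> Cplx) (l : Cplx) : Prop :=
  forall eps, 0 < eps -> exists delta, 0 < delta /\
    forall s, 0 < s < delta -> Cnorm (Csub (f s) l) < eps.

From Stdlib Require Import Reals Lra Nsatz.
Open Scope R_scope.

(* Each of x0 y0 + x1 y1, xi1 - eta0, eta1 + xi0 and two quadratic combinations has zero
   derivative along the system, so it is constant on (0, oo) and equals its limit at 0+.  The
   pairing integral then makes s^(-nu) y1 / x0 constant, whence y1 = s^nu x0 and
   x1 = - s^(-nu) y0.  In the variables q, p, u, v of t = 4 s the two quadratic integrals become
   the two algebraic relations, and the system itself becomes the equations for q, p, u, v. *)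

Lemma Cplx_ext (z w : Cplx) : Re z = Re w -> Im z = Im w -> z = w.
Proof. destruct z, w; unfold Re, Im; simpl; intros; subst; reflexivity. Qed.

Ltac Ccoord :=
  apply Cplx_ext; unfold Csub, Cadd, Cmul, Copp, RtoC, Ci, Re, Im; simpl.

Lemma Cplx_setoid : Setoid_Theory Cplx (@eq Cplx).
Proof. constructor; red; intros; subst; reflexivity. Qed.

#[global] Instance Cplx_ops :
  @Ring_ops Cplx (RtoC 0) (RtoC 1) Cadd Cmul Csub Copp (@eq Cplx) := {}.

#[global] Instance Cplx_ring : Ring (Ro := Cplx_ops).
Proof.
  constructor; try exact Cplx_setoid;
    try (intros ? ? -> ? ? ->; reflexivity); try (intros ? ? ->; reflexivity);
    cbn; intros; Ccoord; ring.
Defined.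

#[global] Instance Cplx_cring : Cring (Rr := Cplx_ring).
Proof. red; intros; Ccoord; ring. Defined.

Lemma Cmul_eq0 (z w : Cplx) : Cmul z w = RtoC 0 -> z = RtoC 0 \/ w = RtoC 0.
Proof.
  destruct z as [a b], w as [c d]; unfold Cmul, RtoC, Re, Im; simpl; intro H.
  injection H as H1 H2.
  destruct (Req_dec a 0), (Req_dec b 0); subst; [left; reflexivity| right..];
    [| | assert (0 < a * a + b * b) by nra];
    apply Cplx_ext; unfold Re, Im; simpl; nra.
Qed.

Lemma RtoC_1_neq0 : RtoC 1 <> RtoC 0.
Proof. unfold RtoC; intro H; injection H; lra. Qed.

#[global] Instance Cplx_integral_domain : Integral_domain (Rcr := Cplx_cring).
Proof. constructor; [exact Cmul_eq0 | exact RtoC_1_neq0]. Defined.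

(* [nsatz] may leave a goal [c <> 0] for a numeral [c] of [Cplx]: its real part decides it. *)
Ltac Cnsatz :=
  nsatz; try (cbn; let H := fresh in intro H; apply (f_equal fst) in H; cbn in H; lra).

Open Scope C_scope.

Lemma Ci_mul_Ci : Ci * Ci = - RtoC 1.
Proof. Ccoord; ring. Qed.

Lemma RtoC_2 : RtoC 2 = RtoC 1 + RtoC 1.
Proof. Ccoord; ring. Qed.

Lemma RtoC_mul (a b : R) : RtoC a * RtoC b = RtoC (a * b).
Proof. Ccoord; ring. Qed.

Lemma RtoC_4 : RtoC 4 = RtoC 2 * RtoC 2.
Proof. Ccoord; ring. Qed.

Lemma RtoC_half : RtoC (1 / 2) * RtoC 2 = RtoC 1.
Proof. Ccoord; field. Qed.

Lemma RtoC_quarter : RtoC (1 / 4) * RtoC 4 = RtoC 1.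
Proof. Ccoord; field. Qed.

Lemma RtoC_mul_inv (r : R) : r <> 0%R -> RtoC r * RtoC (/ r) = RtoC 1.
Proof. intros; Ccoord; field; assumption. Qed.

Lemma RtoC_mul_inv_l (r : R) (z : Cplx) : r <> 0%R -> RtoC r * (RtoC (/ r) * z) = z.
Proof. intros Hr; pose proof (RtoC_mul_inv r Hr) as Hinv; clear - Hinv; Cnsatz. Qed.

Lemma Cmul_Cinv (z : Cplx) : z <> RtoC 0 -> z * Cinv z = RtoC 1.
Proof.
  intros Hz; destruct z as [a b].
  assert (HD : (a * a + b * b <> 0)%R)
    by (intro HD; apply Hz; apply Cplx_ext; unfold Re, Im; simpl; nra).
  apply Cplx_ext; unfold Cmul, Cinv, Re, Im, RtoC; simpl; field; exact HD.
Qed.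

Lemma Cpow_pos_add (s : R) (a b : Cplx) : Cpow_pos s a * Cpow_pos s b = Cpow_pos s (a + b).
Proof.
  destruct a as [A B], b as [C D]; unfold Cpow_pos, Cmul, Cadd, Re, Im; simpl.
  apply Cplx_ext; unfold Re, Im; simpl; rewrite !Rmult_plus_distr_r, exp_plus.
  - rewrite cos_plus; ring.
  - rewrite sin_plus; ring.
Qed.

Lemma Cpow_pos_0 (s : R) : Cpow_pos s (RtoC 0) = RtoC 1.
Proof.
  unfold Cpow_pos, RtoC, Re, Im; simpl; rewrite !Rmult_0_l, exp_0, cos_0, sin_0.
  apply Cplx_ext; unfold Re, Im; simpl; ring.
Qed.

Lemma Cpow_pos_half (s : R) (a : Cplx) :
  Cpow_pos s a = Cpow_pos s (a * RtoC (1 / 2)) * Cpow_pos s (a * RtoC (1 / 2)).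
Proof. rewrite Cpow_pos_add; f_equal; Ccoord; field. Qed.

Lemma Cpow_pos_opp (s : R) (a : Cplx) : Cpow_pos s a * Cpow_pos s (- a) = RtoC 1.
Proof. rewrite Cpow_pos_add, <- (Cpow_pos_0 s); f_equal; Ccoord; ring. Qed.

Lemma derivable_pt_lim_eq (f : R -> R) x l l' :
  derivable_pt_lim f x l -> l = l' -> derivable_pt_lim f x l'.
Proof. intros H <-; exact H. Qed.

Lemma derivable_pt_lim_ext_pos (f g : R -> R) x l : (0 < x)%R ->
  (forall y, (0 < y)%R -> f y = g y) ->
  derivable_pt_lim g x l -> derivable_pt_lim f x l.
Proof.
  intros Hx Hfg H eps Heps; destruct (H eps Heps) as [d Hd].
  assert (Hm : (0 < Rmin d x)%R) by (apply Rmin_pos; [apply cond_pos | lra]).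
  exists (mkposreal _ Hm); intros h Hh Hhd; simpl in Hhd.
  assert (Hhx : (Rabs h < x)%R) by (eapply Rlt_le_trans; [exact Hhd | apply Rmin_r]).
  apply Rabs_def2 in Hhx as [].
  rewrite (Hfg (x + h)%R), (Hfg x) by lra.
  apply Hd; [exact Hh | eapply Rlt_le_trans; [exact Hhd | apply Rmin_l]].
Qed.

Lemma Cderiv_eq f x l l' : Cderiv f x l -> l = l' -> Cderiv f x l'.
Proof. intros H <-; exact H. Qed.

Lemma Cderiv_ext_pos f g x l : (0 < x)%R -> (forall y, (0 < y)%R -> f y = g y) ->
  Cderiv g x l -> Cderiv f x l.
Proof.
  intros Hx Hfg [H1 H2]; split; eapply derivable_pt_lim_ext_pos; eauto;
    intros y Hy; simpl; rewrite Hfg; auto.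
Qed.

Lemma Cderiv_const (c : Cplx) x : Cderiv (fun _ => c) x (RtoC 0).
Proof. split; apply derivable_pt_lim_const. Qed.

Lemma Cderiv_RtoC x : Cderiv (fun r => RtoC r) x (RtoC 1).
Proof. split; [apply derivable_pt_lim_id | apply derivable_pt_lim_const]. Qed.

Lemma Cderiv_add f g x df dg : Cderiv f x df -> Cderiv g x dg ->
  Cderiv (fun r => f r + g r) x (df + dg).
Proof. intros [] []; split; apply derivable_pt_lim_plus; assumption. Qed.

Lemma Cderiv_opp f x df : Cderiv f x df -> Cderiv (fun r => - f r) x (- df).
Proof. intros []; split; apply derivable_pt_lim_opp; assumption. Qed.

Lemma Cderiv_sub f g x df dg : Cderiv f x df -> Cderiv g x dg ->
  Cderiv (fun r => f r - g r) x (df - dg).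
Proof. intros; apply Cderiv_add, Cderiv_opp; assumption. Qed.

Lemma Cderiv_mul f g x df dg : Cderiv f x df -> Cderiv g x dg ->
  Cderiv (fun r => f r * g r) x (df * g x + f x * dg).
Proof.
  intros [f1 f2] [g1 g2]; split; eapply derivable_pt_lim_eq.
  - exact (derivable_pt_lim_minus _ _ _ _ _ (derivable_pt_lim_mult _ _ _ _ _ f1 g1)
             (derivable_pt_lim_mult _ _ _ _ _ f2 g2)).
  - unfold Re, Im, Cmul, Cadd; simpl; unfold Re, Im; ring.
  - exact (derivable_pt_lim_plus _ _ _ _ _ (derivable_pt_lim_mult _ _ _ _ _ f1 g2)
             (derivable_pt_lim_mult _ _ _ _ _ f2 g1)).
  - unfold Re, Im, Cmul, Cadd; simpl; unfold Re, Im; ring.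
Qed.

Lemma Cderiv_Cinv f x df : f x <> RtoC 0 -> Cderiv f x df ->
  Cderiv (fun r => Cinv (f r)) x (- (df * Cinv (f x) * Cinv (f x))).
Proof.
  intros Hnz [f1 f2]; destruct (f x) as [a b] eqn:Ef.
  assert (HD : (a * a + b * b <> 0)%R)
    by (intro HD; apply Hnz, Cplx_ext; unfold Re, Im; simpl; nra).
  pose proof (derivable_pt_lim_plus _ _ _ _ _ (derivable_pt_lim_mult _ _ _ _ _ f1 f1)
                (derivable_pt_lim_mult _ _ _ _ _ f2 f2)) as Hsq.
  assert (Hsq0 : (plus_fct (mult_fct (fun r => Re (f r)) (fun r => Re (f r)))
                   (mult_fct (fun r => Im (f r)) (fun r => Im (f r))) x <> 0)%R)
    by (unfold plus_fct, mult_fct, Re, Im; rewrite Ef; exact HD).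
  destruct df as [c d]; split; eapply derivable_pt_lim_eq.
  - exact (derivable_pt_lim_div _ _ _ _ _ f1 Hsq Hsq0).
  - unfold plus_fct, mult_fct, Re, Im, Cinv, Cmul, Copp, Rsqr; rewrite Ef; simpl.
    field; exact HD.
  - exact (derivable_pt_lim_div _ _ _ _ _ (derivable_pt_lim_opp _ _ _ f2) Hsq Hsq0).
  - unfold plus_fct, mult_fct, opp_fct, Re, Im, Cinv, Cmul, Copp, Rsqr; rewrite Ef; simpl.
    field; exact HD.
Qed.

Lemma Cderiv_Cpow_pos (a : Cplx) s : (0 < s)%R ->
  Cderiv (fun r => Cpow_pos r a) s (a * Cpow_pos s a * RtoC (/ s)).
Proof.
  intros Hs; destruct a as [A B].
  assert (HlA : derivable_pt_lim (fun r => A * ln r)%R s (A * / s)%R)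
    by (apply derivable_pt_lim_scal with (f := ln), derivable_pt_lim_ln, Hs).
  assert (HlB : derivable_pt_lim (fun r => B * ln r)%R s (B * / s)%R)
    by (apply derivable_pt_lim_scal with (f := ln), derivable_pt_lim_ln, Hs).
  pose proof (derivable_pt_lim_comp _ _ _ _ _ HlA (derivable_pt_lim_exp _)) as He.
  pose proof (derivable_pt_lim_comp _ _ _ _ _ HlB (derivable_pt_lim_cos _)) as Hc.
  pose proof (derivable_pt_lim_comp _ _ _ _ _ HlB (derivable_pt_lim_sin _)) as Hsn.
  split; eapply derivable_pt_lim_eq.
  - exact (derivable_pt_lim_mult _ _ _ _ _ He Hc).
  - unfold Re, Im, Cmul, RtoC, Cpow_pos, comp; simpl; unfold Re, Im; simpl; ring.
  - exact (derivable_pt_lim_mult _ _ _ _ _ He Hsn).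
  - unfold Re, Im, Cmul, RtoC, Cpow_pos, comp; simpl; unfold Re, Im; simpl; ring.
Qed.

Lemma Cderiv_comp_div f (c x : R) l : c <> 0%R -> Cderiv f (x / c)%R l ->
  Cderiv (fun t => f (t / c)%R) x (RtoC (1 / c) * l).
Proof.
  intros Hc [f1 f2].
  assert (Hd : derivable_pt_lim (fun t => t / c)%R x (1 / c)%R)
    by (eapply derivable_pt_lim_eq;
        [apply derivable_pt_lim_div_scal, derivable_pt_lim_id | reflexivity]).
  split; eapply derivable_pt_lim_eq;
    [exact (derivable_pt_lim_comp _ _ _ _ _ Hd f1) |
     | exact (derivable_pt_lim_comp _ _ _ _ _ Hd f2) |];
    unfold Re, Im, Cmul, RtoC; simpl; unfold Re, Im; simpl; ring.
Qed.

Lemma Cderiv_Cpow_pos_div (a : Cplx) (c x : R) : (0 < c)%R -> (0 < x)%R ->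
  Cderiv (fun t => Cpow_pos (t / c)%R a) x
    (RtoC (1 / c) * (a * Cpow_pos (x / c)%R a * RtoC (/ (x / c)))).
Proof.
  intros Hc Hx; apply (Cderiv_comp_div (fun r => Cpow_pos r a)); [lra |].
  apply Cderiv_Cpow_pos, Rdiv_lt_0_compat; assumption.
Qed.

Ltac Cderiv_auto :=
  first [ eassumption | apply Cderiv_RtoC | apply Cderiv_const
        | apply Cderiv_Cpow_pos_div; lra | apply Cderiv_comp_div; [lra | eassumption]
        | eapply Cderiv_add; Cderiv_auto | eapply Cderiv_sub; Cderiv_auto
        | eapply Cderiv_mul; Cderiv_auto | eapply Cderiv_opp; Cderiv_auto ].

Open Scope R_scope.

Lemma Cnorm_bound_coords (z : Cplx) :
  Rabs (Re z) <= Cnorm z /\ Rabs (Im z) <= Cnorm z /\ Cnorm z <= Rabs (Re z) + Rabs (Im z).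
Proof.
  unfold Cnorm; destruct z as [a b]; unfold Re, Im; simpl.
  pose proof (Rabs_pos a); pose proof (Rabs_pos b).
  assert (a * a = Rabs a * Rabs a) by (rewrite <- Rabs_mult, Rabs_right; nra).
  assert (b * b = Rabs b * Rabs b) by (rewrite <- Rabs_mult, Rabs_right; nra).
  repeat split; [rewrite <- sqrt_Rsqr_abs.. | rewrite <- (sqrt_Rsqr (Rabs a + Rabs b)) by lra];
    apply sqrt_le_1_alt; unfold Rsqr; nra.
Qed.

Definition Rlim0 (g : R -> R) (l : R) : Prop := limit1_in g (fun s => 0 < s) l 0.

Lemma Rlim0_iff g l : Rlim0 g l <-> forall eps, 0 < eps -> exists d, 0 < d /\
  forall s, 0 < s < d -> Rabs (g s - l) < eps.
Proof.
  unfold Rlim0, limit1_in, limit_in; simpl; unfold Rdist; split;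
    intros H eps He; destruct (H eps He) as [d [Hd H2]]; exists d; split; auto.
  - intros s Hs; apply H2; rewrite Rminus_0_r, Rabs_right; lra.
  - intros s [Hs1 Hs2]; apply H2; rewrite Rminus_0_r, Rabs_right in Hs2; lra.
Qed.

Lemma Clim0_coords f l :
  Clim0 f l <-> Rlim0 (fun s => Re (f s)) (Re l) /\ Rlim0 (fun s => Im (f s)) (Im l).
Proof.
  rewrite !Rlim0_iff; unfold Clim0; split.
  - intros H; split; intros eps He; destruct (H eps He) as [d [Hd H2]]; exists d;
      split; auto; intros s Hs; specialize (H2 s Hs);
      pose proof (Cnorm_bound_coords (Csub (f s) l)) as [? [? ?]];
      unfold Csub, Cadd, Copp, Re, Im in *; simpl in *; unfold Rminus; lra.
  - intros [H1 H2] eps He.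
    destruct (H1 (eps / 2) ltac:(lra)) as [d1 [Hd1 K1]].
    destruct (H2 (eps / 2) ltac:(lra)) as [d2 [Hd2 K2]].
    exists (Rmin d1 d2); split; [apply Rmin_pos; auto |].
    intros s Hs; pose proof (Rmin_l d1 d2); pose proof (Rmin_r d1 d2).
    specialize (K1 s ltac:(lra)); specialize (K2 s ltac:(lra)).
    pose proof (Cnorm_bound_coords (Csub (f s) l)) as [? [? ?]].
    unfold Csub, Cadd, Copp, Re, Im in *; simpl in *; unfold Rminus in *; lra.
Qed.

Open Scope C_scope.

Lemma Clim0_eq f l l' : Clim0 f l -> l = l' -> Clim0 f l'.
Proof. intros H <-; exact H. Qed.

Lemma Clim0_const (c : Cplx) : Clim0 (fun _ => c) c.
Proof. rewrite Clim0_coords; split; apply (limit_free (fun _ => _) _ 0 0). Qed.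

Lemma Clim0_RtoC : Clim0 (fun s => RtoC s) (RtoC 0).
Proof. rewrite Clim0_coords; split; [apply lim_x | apply (limit_free (fun _ => 0%R) _ 0 0)]. Qed.

Lemma Clim0_add f g a b : Clim0 f a -> Clim0 g b -> Clim0 (fun s => f s + g s) (a + b).
Proof.
  rewrite !Clim0_coords; intros [] []; split; apply limit_plus; assumption.
Qed.

Lemma Clim0_opp f a : Clim0 f a -> Clim0 (fun s => - f s) (- a).
Proof. rewrite !Clim0_coords; intros []; split; apply limit_Ropp; assumption. Qed.

Lemma Clim0_sub f g a b : Clim0 f a -> Clim0 g b -> Clim0 (fun s => f s - g s) (a - b).
Proof. intros; apply Clim0_add, Clim0_opp; assumption. Qed.

Lemma Clim0_mul f g a b : Clim0 f a -> Clim0 g b -> Clim0 (fun s => f s * g s) (a * b).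
Proof.
  rewrite !Clim0_coords; intros [A1 A2] [B1 B2]; split.
  - exact (limit_minus _ _ _ _ _ _ (limit_mul _ _ _ _ _ _ A1 B1) (limit_mul _ _ _ _ _ _ A2 B2)).
  - exact (limit_plus _ _ _ _ _ _ (limit_mul _ _ _ _ _ _ A1 B2) (limit_mul _ _ _ _ _ _ A2 B1)).
Qed.

Ltac Clim0_auto :=
  first [ eassumption | apply Clim0_RtoC | apply Clim0_const
        | eapply Clim0_add; Clim0_auto | eapply Clim0_sub; Clim0_auto
        | eapply Clim0_mul; Clim0_auto | eapply Clim0_opp; Clim0_auto ].

Open Scope R_scope.

Lemma derivable_pt_lim_zero_const (g : R -> R) :
  (forall y, 0 < y -> derivable_pt_lim g y 0) -> forall a b, 0 < a -> 0 < b -> g a = g b.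
Proof.
  intros Hg.
  assert (Hlt : forall a b, 0 < a -> a < b -> g a = g b).
  { intros a b Ha Hab; destruct (MVT_cor2 g (fun _ => 0) a b Hab) as [c [Hc _]];
      [intros c Hc; apply Hg; lra | lra]. }
  intros a b Ha Hb; destruct (Rtotal_order a b) as [Hab | [-> | Hab]];
    [apply Hlt | reflexivity | symmetry; apply Hlt]; assumption.
Qed.

Lemma Cderiv_zero_const f : (forall y, 0 < y -> Cderiv f y (RtoC 0)) ->
  forall a b, 0 < a -> 0 < b -> f a = f b.
Proof.
  intros H a b Ha Hb; apply Cplx_ext;
    [apply (derivable_pt_lim_zero_const (fun r => Re (f r)))
    | apply (derivable_pt_lim_zero_const (fun r => Im (f r)))];
    auto; intros y Hy; apply (H y Hy).
Qed.

Lemma Cnorm_eq0 (z : Cplx) : Cnorm z = 0 -> z = RtoC 0.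
Proof.
  destruct z as [a b]; unfold Cnorm, Re, Im; simpl; intros Hs.
  apply sqrt_eq_0 in Hs; [apply Cplx_ext; unfold RtoC, Re, Im; simpl; nra | nra].
Qed.

Lemma Cderiv_zero_Clim0 f l : (forall y, 0 < y -> Cderiv f y (RtoC 0)) -> Clim0 f l ->
  forall s, 0 < s -> f s = l.
Proof.
  intros H Hl s Hs.
  assert (E : Csub (f s) l = RtoC 0).
  { apply Cnorm_eq0, Rle_antisym; [| unfold Cnorm; apply sqrt_pos].
    apply Rnot_lt_le; intros Heps; destruct (Hl _ Heps) as [d [Hd Hd2]].
    assert (0 < Rmin s d) by (apply Rmin_pos; lra).
    pose proof (Rmin_r s d); pose proof (Rmin_l s d).
    specialize (Hd2 (Rmin s d / 2) ltac:(lra)).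
    rewrite <- (Cderiv_zero_const f H s (Rmin s d / 2)) in Hd2 by lra; lra. }
  destruct (f s), l; unfold Csub, Cadd, Copp, RtoC, Re, Im in E; simpl in E.
  injection E as E1 E2; apply Cplx_ext; unfold Re, Im; simpl; lra.
Qed.

Section System.

Context {nu : Cplx} {x0 x1 y0 y1 xi0 xi1 eta0 eta1 : R -> Cplx}
  {x0' x1' y0' y1' xi0' xi1' eta0' eta1' : R -> Cplx}.

Hypothesis Hd : forall s, 0 < s ->
  Cderiv x0 s (x0' s) /\ Cderiv x1 s (x1' s) /\ Cderiv y0 s (y0' s) /\
  Cderiv y1 s (y1' s) /\ Cderiv xi0 s (xi0' s) /\ Cderiv xi1 s (xi1' s) /\
  Cderiv eta0 s (eta0' s) /\ Cderiv eta1 s (eta1' s).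

Hypothesis Hsys : forall s, 0 < s ->
  (RtoC s * x0' s = - (eta0 s * x0 s) - x1 s)%C /\
  (RtoC s * x1' s = - (eta1 s * x0 s) + RtoC s * x0 s + xi0 s * x0 s
                      + xi1 s * x1 s)%C /\
  (RtoC s * y1' s = - (xi1 s * y1 s) + y0 s)%C /\
  (RtoC s * y0' s = - (xi0 s * y1 s) - RtoC s * y1 s + eta0 s * y0 s
                      + eta1 s * y1 s)%C /\
  xi0' s = (x0 s * y0 s)%C /\
  xi1' s = (x0 s * y1 s)%C /\
  eta0' s = (x0 s * y1 s)%C /\
  eta1' s = (x1 s * y1 s)%C.

Hypothesis Lxi0 : Clim0 xi0 (RtoC 0).
Hypothesis Lxi1 : Clim0 xi1 (- nu)%C.
Hypothesis Leta0 : Clim0 eta0 (RtoC 0).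
Hypothesis Leta1 : Clim0 eta1 (RtoC 0).
Hypothesis Lx0y0 : Clim0 (fun s => x0 s * y0 s)%C (RtoC 0).
Hypothesis Lx0y1 : Clim0 (fun s => x0 s * y1 s)%C (RtoC 0).
Hypothesis Lx1y0 : Clim0 (fun s => x1 s * y0 s)%C (RtoC 0).
Hypothesis Lx1y1 : Clim0 (fun s => x1 s * y1 s)%C (RtoC 0).

Ltac system_at s :=
  destruct (Hd s ltac:(lra)) as [d_x0 [d_x1 [d_y0 [d_y1 [d_xi0 [d_xi1 [d_eta0 d_eta1]]]]]]];
  destruct (Hsys s ltac:(lra)) as [e_x0 [e_x1 [e_y1 [e_y0 [e_xi0 [e_xi1 [e_eta0 e_eta1]]]]]]];
  pose proof (RtoC_mul_inv s ltac:(lra)) as e_inv.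

Ltac first_integral :=
  apply Cderiv_zero_Clim0;
  [ intros s Hs; system_at s; eapply Cderiv_eq; [Cderiv_auto |]
  | eapply Clim0_eq; [Clim0_auto | Ccoord; ring] ].

Lemma pairing_eq0 s : 0 < s -> (x0 s * y0 s + x1 s * y1 s = RtoC 0)%C.
Proof.
  revert s; first_integral.
  clear - e_x0 e_x1 e_y1 e_y0 e_inv; Cnsatz.
Qed.

Lemma xi1_sub_eta0 s : 0 < s -> (xi1 s - eta0 s = - nu)%C.
Proof.
  revert s; first_integral.
  clear - e_xi1 e_eta0; Cnsatz.
Qed.

Lemma eta1_add_xi0 s : 0 < s -> (eta1 s + xi0 s = RtoC 0)%C.
Proof.
  revert s; first_integral.
  pose proof (pairing_eq0 s Hs) as K_pair; clear - e_xi0 e_eta1 K_pair; Cnsatz.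
Qed.

Lemma x0y1_first_integral s : 0 < s ->
  (RtoC s * (x0 s * y1 s) + eta0 s * eta0 s - (RtoC 1 + nu) * eta0 s - RtoC 2 * xi0 s
   = RtoC 0)%C.
Proof.
  revert s; first_integral.
  pose proof (pairing_eq0 s Hs) as K_pair; pose proof (xi1_sub_eta0 s Hs) as K_xi1.
  pose proof RtoC_2 as K_2; clear - e_x0 e_y1 e_xi0 e_eta0 e_inv K_pair K_xi1 K_2; Cnsatz.
Qed.

Lemma hamiltonian_first_integral s : 0 < s ->
  (eta0 s + x1 s * y0 s - nu * (x0 s * y0 s) - RtoC s * (x0 s * y1 s)
   - RtoC 2 * xi0 s * (x0 s * y1 s) + RtoC 2 * (x0 s * y0 s) * eta0 s = RtoC 0)%C.
Proof.
  revert s; first_integral.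
  pose proof (pairing_eq0 s Hs) as K_pair; pose proof (xi1_sub_eta0 s Hs) as K_xi1.
  pose proof (eta1_add_xi0 s Hs) as K_eta1; pose proof RtoC_2 as K_2.
  clear - e_x0 e_x1 e_y1 e_y0 e_xi0 e_eta0 e_inv K_pair K_xi1 K_eta1 K_2; Cnsatz.
Qed.

Hypothesis Hx0 : forall s, 0 < s -> x0 s <> RtoC 0.
Hypothesis Hlim : Clim0 (fun s => Cpow_pos s (- nu) * y1 s / x0 s)%C (RtoC 1).

(* [s^(-nu) y1 / x0] has logarithmic derivative [(x0 y0 + x1 y1) / (s x0 y1) = 0]. *)
Lemma y1_eq_Cpow_x0 s : 0 < s -> y1 s = (Cpow_pos s nu * x0 s)%C.
Proof.
  intros Hs.
  assert (Hratio : (Cpow_pos s (- nu) * y1 s * Cinv (x0 s) = RtoC 1)%C).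
  { revert s Hs; apply Cderiv_zero_Clim0; [| exact Hlim].
    intros s Hs; system_at s; eapply Cderiv_eq.
    - apply Cderiv_mul; [apply Cderiv_mul; [apply Cderiv_Cpow_pos; exact Hs | exact d_y1] |].
      apply Cderiv_Cinv; [apply Hx0; exact Hs | exact d_x0].
    - pose proof (pairing_eq0 s Hs) as K_pair; pose proof (xi1_sub_eta0 s Hs) as K_xi1.
      pose proof (Cmul_Cinv _ (Hx0 s Hs)) as K_inv.
      clear - e_x0 e_y1 e_inv K_pair K_xi1 K_inv; Cnsatz. }
  pose proof (Cmul_Cinv _ (Hx0 s Hs)) as K_inv; pose proof (Cpow_pos_opp s nu) as K_nu.
  clear - Hratio K_inv K_nu; Cnsatz.
Qed.

Lemma x1_eq_Cpow_y0 s : 0 < s -> x1 s = (- (Cpow_pos s (- nu) * y0 s))%C.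
Proof.
  intros Hs; pose proof (pairing_eq0 s Hs) as K_pair; pose proof (y1_eq_Cpow_x0 s Hs) as K_y1.
  assert (Hfact : (x0 s * (y0 s + Cpow_pos s nu * x1 s) = RtoC 0)%C)
    by (clear - K_pair K_y1; Cnsatz).
  pose proof (Cpow_pos_opp s nu) as K_nu.
  apply Cmul_eq0 in Hfact as [Hx | Hy0]; [exfalso; exact (Hx0 s Hs Hx) |].
  clear - Hy0 K_nu; Cnsatz.
Qed.

Variables q p u v : R -> Cplx.

Hypothesis Hq : forall s, 0 < s ->
  x0 s = (Ci * Cpow_pos s (- (nu * RtoC (1/2))) * q ((4 * s)%R))%C.
Hypothesis Hp : forall s, 0 < s ->
  y0 s = (Ci * Cpow_pos s (nu * RtoC (1/2))
           * (p ((4 * s)%R) - nu * RtoC (1/2) * q ((4 * s)%R)))%C.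
Hypothesis Hu : forall s, 0 < s -> eta0 s = (- (RtoC (1/4) * u ((4 * s)%R)))%C.
Hypothesis Hv : forall s, 0 < s ->
  xi0 s = (RtoC (1/4) * (- v ((4 * s)%R) + nu * RtoC (1/2) * u ((4 * s)%R)))%C.

Ltac at_quarter t :=
  let s := constr:((t / 4)%R) in
  pose proof (Hq s ltac:(lra)) as K_q; pose proof (Hp s ltac:(lra)) as K_p;
  pose proof (Hu s ltac:(lra)) as K_u; pose proof (Hv s ltac:(lra)) as K_v;
  replace (4 * s)%R with t in K_q, K_p, K_u, K_v by field;
  assert (K_t : RtoC t = (RtoC 4 * RtoC s)%C) by (rewrite RtoC_mul; f_equal; field);
  pose proof (y1_eq_Cpow_x0 s ltac:(lra)) as K_y1;
  pose proof (x1_eq_Cpow_y0 s ltac:(lra)) as K_x1;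
  pose proof (Cpow_pos_opp s nu) as K_nu; pose proof (Cpow_pos_half s nu) as K_half;
  pose proof (Cpow_pos_opp s (nu * RtoC (1/2))%C) as K_halfopp;
  pose proof Ci_mul_Ci as K_i; pose proof RtoC_2 as K_2; pose proof RtoC_4 as K_4;
  pose proof RtoC_half as K_12; pose proof RtoC_quarter as K_14.

Lemma tq2_eq t : 0 < t ->
  (RtoC t * q t * q t = RtoC (1/4) * u t * u t + u t + RtoC 2 * v t)%C.
Proof.
  intros Ht; at_quarter t.
  pose proof (x0y1_first_integral (t / 4) ltac:(lra)) as K.
  clear - K K_q K_u K_v K_t K_y1 K_half K_halfopp K_i K_2 K_4 K_12 K_14; Cnsatz.
Qed.

Lemma u_quadratic_eq t : 0 < t ->
  (u t = RtoC 4 * p t * p t - (nu * nu - RtoC t + RtoC 2 * v t) * q t * q t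
         + RtoC 2 * q t * p t * u t)%C.
Proof.
  intros Ht; at_quarter t.
  pose proof (hamiltonian_first_integral (t / 4) ltac:(lra)) as K.
  clear - K K_q K_p K_u K_v K_t K_y1 K_x1 K_nu K_half K_halfopp K_i K_2 K_4 K_12 K_14.
  Cnsatz.
Qed.

Lemma q_eq_x0 t : 0 < t ->
  q t = (- Ci * (Cpow_pos (t / 4) (nu * RtoC (1/2)) * x0 (t / 4)%R))%C.
Proof. intros Ht; at_quarter t; clear - K_q K_halfopp K_i; Cnsatz. Qed.

Lemma p_eq_y0 t : 0 < t ->
  p t = (- Ci * (Cpow_pos (t / 4) (- (nu * RtoC (1/2))) * y0 (t / 4)%R)
         + nu * RtoC (1/2) * q t)%C.
Proof. intros Ht; at_quarter t; clear - K_p K_halfopp K_i; Cnsatz. Qed.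

Lemma u_eq_eta0 t : 0 < t -> u t = (- (RtoC 4 * eta0 (t / 4)%R))%C.
Proof. intros Ht; at_quarter t; clear - K_u K_14; Cnsatz. Qed.

Lemma v_eq_xi0 t : 0 < t ->
  v t = (- (RtoC 4 * xi0 (t / 4)%R) + nu * RtoC (1/2) * u t)%C.
Proof. intros Ht; at_quarter t; clear - K_u K_v K_14; Cnsatz. Qed.

Ltac derivative_at_quarter t eq_lemma :=
  eapply Cderiv_ext_pos; [lra | exact eq_lemma |];
  eapply Cderiv_eq; [system_at (t / 4)%R; Cderiv_auto |];
  at_quarter t; system_at (t / 4)%R;
  pose proof (RtoC_mul_inv t ltac:(lra)) as K_tinv.

Lemma q_deriv t : 0 < t -> Cderiv q t (RtoC (/ t) * (p t + RtoC (1/4) * q t * u t))%C.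
Proof.
  intros Ht; derivative_at_quarter t q_eq_x0.
  clear - e_x0 e_inv K_tinv K_q K_p K_u K_t K_y1 K_x1 K_nu K_half K_halfopp
    K_i K_2 K_4 K_12 K_14; Cnsatz.
Qed.

Lemma p_deriv t : 0 < t ->
  Cderiv p t (RtoC (/ t) * ((RtoC (1/4) * nu * nu - RtoC (1/4) * RtoC t
                              + RtoC (1/2) * v t) * q t - RtoC (1/4) * p t * u t))%C.
Proof.
  intros Ht; pose proof (q_deriv t Ht) as d_q; derivative_at_quarter t p_eq_y0.
  pose proof (eta1_add_xi0 (t / 4) ltac:(lra)) as K_eta1.
  clear - e_y0 e_inv K_eta1 K_tinv K_q K_p K_u K_v K_t K_y1 K_x1 K_nu K_half K_halfopp
    K_i K_2 K_4 K_12 K_14; Cnsatz.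
Qed.

Lemma u_deriv t : 0 < t -> Cderiv u t (q t * q t)%C.
Proof.
  intros Ht; derivative_at_quarter t u_eq_eta0.
  clear - e_eta0 K_q K_y1 K_half K_halfopp K_i K_4 K_14; Cnsatz.
Qed.

Lemma v_deriv t : 0 < t -> Cderiv v t (q t * p t)%C.
Proof.
  intros Ht; pose proof (u_deriv t Ht) as d_u; derivative_at_quarter t v_eq_xi0.
  clear - e_xi0 e_eta0 K_q K_p K_y1 K_half K_halfopp K_i K_2 K_4 K_12 K_14; Cnsatz.
Qed.

End System.

Theorem mainTheorem5
  (nu : Cplx)
  (x0 x1 y0 y1 xi0 xi1 eta0 eta1 : R -> Cplx)
  (x0' x1' y0' y1' xi0' xi1' eta0' eta1' : R -> Cplx)
  (Hsm : Csmooth_pos x0 /\ Csmooth_pos x1 /\ Csmooth_pos y0 /\ Csmooth_pos y1 /\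
         Csmooth_pos xi0 /\ Csmooth_pos xi1 /\ Csmooth_pos eta0 /\ Csmooth_pos eta1)
  (Hd : forall s, 0 < s ->
     Cderiv x0 s (x0' s) /\ Cderiv x1 s (x1' s) /\ Cderiv y0 s (y0' s) /\
     Cderiv y1 s (y1' s) /\ Cderiv xi0 s (xi0' s) /\ Cderiv xi1 s (xi1' s) /\
     Cderiv eta0 s (eta0' s) /\ Cderiv eta1 s (eta1' s))
  (* the system, with nu_0 = 0, nu_1 = nu *)
  (Hsys : forall s, 0 < s ->
     (RtoC s * x0' s = - (eta0 s * x0 s) - x1 s)%C /\
     (RtoC s * x1' s = - (eta1 s * x0 s) + RtoC s * x0 s + xi0 s * x0 s
                         + xi1 s * x1 s)%C /\
     (RtoC s * y1' s = - (xi1 s * y1 s) + y0 s)%C /\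
     (RtoC s * y0' s = - (xi0 s * y1 s) - RtoC s * y1 s + eta0 s * y0 s
                         + eta1 s * y1 s)%C /\
     xi0' s = (x0 s * y0 s)%C /\
     xi1' s = (x0 s * y1 s)%C /\
     eta0' s = (x0 s * y1 s)%C /\
     eta1' s = (x1 s * y1 s)%C)
  (* boundary behaviour as s -> 0+, with e1 = 0 + nu, e2 = 0 * nu *)
  (Hb : Clim0 xi0 (RtoC 0 * nu)%C /\ Clim0 xi1 (- (RtoC 0 + nu))%C /\
        Clim0 eta0 (RtoC 0) /\ Clim0 eta1 (RtoC 0) /\
        Clim0 (fun s => x0 s * y0 s)%C (RtoC 0) /\
        Clim0 (fun s => x0 s * y1 s)%C (RtoC 0) /\
        Clim0 (fun s => x1 s * y0 s)%C (RtoC 0) /\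
        Clim0 (fun s => x1 s * y1 s)%C (RtoC 0))
  (Hx0 : forall s, 0 < s -> x0 s <> RtoC 0)
  (Hlim : Clim0 (fun s => Cpow_pos s (- nu) * y1 s / x0 s)%C (RtoC 1))
  (* the functions q, p, u, v of t = 4 s *)
  (q p u v : R -> Cplx)
  (Hq : forall s, 0 < s ->
     x0 s = (Ci * Cpow_pos s (- (nu * RtoC (1/2))) * q ((4 * s)%R))%C)
  (Hp : forall s, 0 < s ->
     y0 s = (Ci * Cpow_pos s (nu * RtoC (1/2))
              * (p ((4 * s)%R) - nu * RtoC (1/2) * q ((4 * s)%R)))%C)
  (Hu : forall s, 0 < s -> eta0 s = (- (RtoC (1/4) * u ((4 * s)%R)))%C)
  (Hv : forall s, 0 < s ->
     xi0 s = (RtoC (1/4) * (- v ((4 * s)%R) + nu * RtoC (1/2) * u ((4 * s)%R)))%C) :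
  forall t, 0 < t ->
    (RtoC t * q t * q t
       = RtoC (1/4) * u t * u t + u t + RtoC 2 * v t)%C /\
    (u t = RtoC 4 * p t * p t - (nu * nu - RtoC t + RtoC 2 * v t) * q t * q t
           + RtoC 2 * q t * p t * u t)%C /\
    exists dq dp du dv : Cplx,
      Cderiv q t dq /\ Cderiv p t dp /\ Cderiv u t du /\ Cderiv v t dv /\
      du = (q t * q t)%C /\
      dv = (q t * p t)%C /\
      (RtoC t * dq = p t + RtoC (1/4) * q t * u t)%C /\
      (RtoC t * dp = (RtoC (1/4) * nu * nu - RtoC (1/4) * RtoC t
                      + RtoC (1/2) * v t) * q t - RtoC (1/4) * p t * u t)%C.
Proof.
  destruct Hb as [Lxi0 [Lxi1 [Leta0 [Leta1 [Lx0y0 [Lx0y1 [Lx1y0 Lx1y1]]]]]]].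
  assert (Lxi0' : Clim0 xi0 (RtoC 0)) by (eapply Clim0_eq; [exact Lxi0 | Ccoord; ring]).
  assert (Lxi1' : Clim0 xi1 (- nu)%C) by (eapply Clim0_eq; [exact Lxi1 | Ccoord; ring]).
  clear Lxi0 Lxi1.
  intros t Ht.
  split; [eapply tq2_eq; eassumption |].
  split; [eapply u_quadratic_eq; eassumption |].
  exists (RtoC (/ t) * (p t + RtoC (1/4) * q t * u t))%C,
    (RtoC (/ t) * ((RtoC (1/4) * nu * nu - RtoC (1/4) * RtoC t + RtoC (1/2) * v t) * q t
                   - RtoC (1/4) * p t * u t))%C,
    (q t * q t)%C, (q t * p t)%C.
  split; [eapply q_deriv; eassumption |].
  split; [eapply p_deriv; eassumption |].
  split; [eapply u_deriv; eassumption |].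
  split; [eapply v_deriv; eassumption |].
  do 2 (split; [reflexivity |]).
  split; apply RtoC_mul_inv_l; lra.
Qed.
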